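(* Let $\mathrm B_1=\{\mathbf x^{\mathbf d}: d_i<w_{i,1}\ \forall i\}$ and $\mathrm B_2=\{\mathbf x^{\mathbf d}: d_i<w_{i,2}\ \forall i\}$ be boxes in $x_1,\dots,x_r$ (all $w_{i,1},w_{i,2}$ positive integers), and $\beta=\mathrm B_1\cup\mathrm B_2$. Let $w_i=\max(w_{i,1},w_{i,2})$, $V_1=\{x_j: w_{j,1}>w_{j,2}\}$ and $V_2=\{x_k: w_{k,1}<w_{k,2}\}$. Then every minimal generator of $I_\beta$ is either a corner monomial $x_i^{w_i}$ for some $i$, or a two-variable monomial $x_j^{w_{j,2}}x_k^{w_{k,1}}$ with $x_j\in V_1$ and $x_k\in V_2$.
   Context: $I_\beta$ is the monomial ideal generated by all monomials not in $\beta$; its minimal generators are its minimal monomials under divisibility. *)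

From mathcomp Require Import all_boot.
Set Implicit Arguments. Unset Strict Implicit. Unset Printing Implicit Defensive.

(* A monomial x^d in the variables x_0, ..., x_{r-1} is represented by its
   exponent vector d : {ffun 'I_r -> nat}. *)
Notation monomial r := {ffun 'I_r -> nat}.

Definition mdvd (r : nat) (a b : monomial r) : bool := [forall i, a i <= b i].

Definition in_box (r : nat) (w : 'I_r -> nat) (d : monomial r) : bool :=
  [forall i, d i < w i].

Definition in_beta (r : nat) (w1 w2 : 'I_r -> nat) (d : monomial r) : bool :=
  in_box w1 d || in_box w2 d.

(* I_beta is generated by all monomials not in beta; its minimal generators are
   the monomials not in beta that are minimal under divisibility among those. *)
Definition in_I (r : nat) (beta : pred (monomial r)) (d : monomial r) : bool :=
  ~~ beta d.

Definition minimal_generator (r : nat) (beta : pred (monomial r)) (d : monomial r)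
  : Prop :=
  in_I beta d /\ forall e : monomial r, mdvd e d -> in_I beta e -> e = d.

Definition xpow (r : nat) (i : 'I_r) (a : nat) : monomial r :=
  [ffun l => if l == i then a else 0].

Definition xpow2 (r : nat) (j : 'I_r) (a : nat) (k : 'I_r) (b : nat) : monomial r :=
  [ffun l => if l == j then a else if l == k then b else 0].

From mathcomp Require Import all_boot.
From mathcomp Require Import zify.

Set Implicit Arguments. Unset Strict Implicit. Unset Printing Implicit Defensive.

(* A monomial x^d outside beta leaves B_2 through some variable x_j (w_{j,2} <= d_j)
   and B_1 through some x_k (w_{k,1} <= d_k). If some d_i reaches w_i, the corner
   x_i^{w_i} divides x^d and lies outside beta. Otherwise w_{j,2} <= d_j < w_{j,1}
   and w_{k,1} <= d_k < w_{k,2}, so j != k, x_j is in V_1, x_k is in V_2, and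
   x_j^{w_{j,2}} x_k^{w_{k,1}} divides x^d and lies outside beta. Minimality of
   x^d forces it to equal that divisor. *)

Lemma notin_boxP (r : nat) (w : 'I_r -> nat) (d : monomial r) :
  reflect (exists i, w i <= d i) (~~ in_box w d).
Proof.
by apply: (iffP forallPn) => -[i hi]; exists i; [rewrite leqNgt | rewrite -leqNgt].
Qed.

Lemma in_I_betaE (r : nat) (w1 w2 : 'I_r -> nat) (d : monomial r) :
  in_I (in_beta w1 w2) d = ~~ in_box w1 d && ~~ in_box w2 d.
Proof. by rewrite /in_I /in_beta negb_or. Qed.

Lemma minimal_generator_eq (r : nat) (beta : pred (monomial r)) (d e : monomial r) :
  minimal_generator beta d -> mdvd e d -> in_I beta e -> d = e.
Proof. by move=> [_ hmin] hed hIe; rewrite (hmin e hed hIe). Qed.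

Lemma mdvd_xpow (r : nat) (i : 'I_r) (a : nat) (d : monomial r) :
  a <= d i -> mdvd (xpow i a) d.
Proof. by move=> hi; apply/forallP => l; rewrite ffunE; case: eqP => [->|]. Qed.

Lemma mdvd_xpow2 (r : nat) (j k : 'I_r) (a b : nat) (d : monomial r) :
  a <= d j -> b <= d k -> mdvd (xpow2 j a k b) d.
Proof.
move=> hj hk; apply/forallP => l; rewrite ffunE.
by case: eqP => [->|_] //; case: eqP => [->|].
Qed.

Lemma xpow_notin_box (r : nat) (w : 'I_r -> nat) (i : 'I_r) (a : nat) :
  w i <= a -> ~~ in_box w (xpow i a).
Proof. by move=> hi; apply/notin_boxP; exists i; rewrite ffunE eqxx. Qed.

Lemma xpow2_notin_box_l (r : nat) (w : 'I_r -> nat) (j k : 'I_r) (a b : nat) :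
  w j <= a -> ~~ in_box w (xpow2 j a k b).
Proof. by move=> hj; apply/notin_boxP; exists j; rewrite ffunE eqxx. Qed.

Lemma xpow2_notin_box_r (r : nat) (w : 'I_r -> nat) (j k : 'I_r) (a b : nat) :
  j != k -> w k <= b -> ~~ in_box w (xpow2 j a k b).
Proof.
by move=> hjk hk; apply/notin_boxP; exists k; rewrite ffunE eq_sym (negbTE hjk) eqxx.
Qed.

Section TwoBoxes.

Variables (r : nat) (w1 w2 : 'I_r -> nat).

Lemma corner_notin_beta (i : 'I_r) :
  in_I (in_beta w1 w2) (xpow i (maxn (w1 i) (w2 i))).
Proof. by rewrite in_I_betaE !xpow_notin_box ?leq_maxl ?leq_maxr. Qed.

Lemma cross_notin_beta (j k : 'I_r) :
  j != k -> in_I (in_beta w1 w2) (xpow2 j (w2 j) k (w1 k)).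
Proof. by move=> hjk; rewrite in_I_betaE xpow2_notin_box_r ?xpow2_notin_box_l. Qed.

Lemma notin_beta_below_corners (d : monomial r) :
  in_I (in_beta w1 w2) d -> (forall i, d i < maxn (w1 i) (w2 i)) ->
  exists j k, [/\ w2 j < w1 j, w1 k < w2 k, w2 j <= d j & w1 k <= d k].
Proof.
rewrite in_I_betaE => /andP[/notin_boxP[k hk] /notin_boxP[j hj]] hmax.
have := hmax j; have := hmax k.
by exists j, k; split => //; lia.
Qed.

End TwoBoxes.

Theorem lemma11p2 (r : nat) (w1 w2 : 'I_r -> nat)
  (hw1 : forall i, 0 < w1 i) (hw2 : forall i, 0 < w2 i)
  (d : monomial r) :
  minimal_generator (in_beta w1 w2) d ->
  (exists i : 'I_r, d = xpow i (maxn (w1 i) (w2 i)))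
  \/ (exists (j k : 'I_r), w1 j > w2 j /\ w1 k < w2 k /\
        d = xpow2 j (w2 j) k (w1 k)).
Proof.
move=> hd.
have [/existsP[i hi] | /existsPn hbelow] := boolP [exists i, maxn (w1 i) (w2 i) <= d i].
  left; exists i; apply: minimal_generator_eq hd _ (corner_notin_beta _ _ i).
  exact: mdvd_xpow.
have /(notin_beta_below_corners hd.1) [j [k [hVj hVk hdj hdk]]] :
    forall l, d l < maxn (w1 l) (w2 l) by move=> l; rewrite ltnNge hbelow.
have hjk : j != k by apply/eqP => ejk; move: hVj hVk; rewrite ejk; lia.
right; exists j, k; split=> //; split=> //.
apply: minimal_generator_eq hd _ (cross_notin_beta _ _ hjk).
exact: mdvd_xpow2.
Qed.
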